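(* Let $1\le K<d$ be integers and $T_\lambda$ as below. For $\lambda\in(0,1)$ let $\bar F_\lambda$ solve $\bar F'(w)=T_\lambda(\bar F(w))-\bar F(w)$, $\bar F(0)=\lambda$, let $\mathbb E[W_\lambda]=\frac1\lambda\int_0^\infty T_\lambda(\bar F_\lambda(w))\,dw$ and $$p_\lambda=1-\sum_{j=0}^{K-1}\frac{K-j}{K}\binom dj(1-\lambda)^j\lambda^{d-j}.$$ Then $$\lim_{\lambda\to0^+}-\frac{\mathbb E[W_\lambda]}{\log(p_\lambda)}=\frac1{d-K+1}\qquad\text{and}\qquad\lim_{\lambda\to1^-}-\frac{\mathbb E[W_\lambda]}{\log(p_\lambda)}=\frac K{d-K}.$$
   Context: $T_\lambda(u)=\frac{\lambda}{K}\sum_{j=0}^{K-1}(K-j)\binom{d}{j}u^{d-j}(1-u)^j$ (LL($d,K$) policy, exponential(1) job sizes); $p_\lambda$ is the probability that a job is assigned to an idle server. *)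

From Stdlib Require Import Reals.
From Coquelicot Require Import Coquelicot.
Open Scope R_scope.

Definition Tl (d K : nat) (l u : R) : R :=
  l / INR K * sum_f_R0 (fun j => INR (K - j) * Binomial.C d j * u ^ (d - j) * (1 - u) ^ j) (K - 1).

Definition p_idle (d K : nat) (l : R) : R :=
  1 - sum_f_R0 (fun j => INR (K - j) / INR K * Binomial.C d j * (1 - l) ^ j * l ^ (d - j)) (K - 1).

Definition solves_ode (d K : nat) (l : R) (f : R -> R) : Prop :=
  f 0 = l /\
  filterlim f (at_right 0) (locally l) /\
  (forall w, 0 < w -> is_derive f w (Tl d K l (f w) - f w)).

Definition EW (d K : nat) (l : R) (f : R -> R) : R :=
  / l * RInt_gen (fun w => Tl d K l (f w)) (at_point 0) (Rbar_locally p_infty).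

(* Write T_l(u) = l * u * r(u) with the polynomial
     r(v) = 1/K * sum_{j<K} (K-j) C(d,j) v^(d-j-1) (1-v)^j,
   so that p_l = 1 - l r(l).  On [0,1] one has 0 <= r <= 1, and
     r(v) = v^(d-K) s(v) with s(0) > 0,    1 - r(v) = (1-v) q(v) with q > 0,
   where q(1) = (d-K)/K.  The proof has four steps.
   1. The ODE solution F stays between l e^(-w) and l e^(-(1-l) w) (real
      induction); in particular 0 < F < 1 and F(w) -> 0.
   2. With G(u) = int_0^u l r/(1 - l r), the quantity
      int_0^W T_l(F) + G(F(W)) is constant in W; letting W -> oo gives
        E[W_l] = int_0^l r(v) / (1 - l r(v)) dv.
   3. As l -> 0 the integral is ~ s(0) l^(d-K+1) / (d-K+1), while
      -ln p_l ~ l r(l) ~ s(0) l^(d-K+1).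
   4. As l -> 1, 1 - l r(v) = (1-l) + l (1-v) q(v) makes the integral
      ~ -ln(1-l) / q(1), while -ln p_l = -ln(1-l) - ln(1 + l q(l)) ~ -ln(1-l). *)
From Stdlib Require Import Reals Lra Lia Psatz Classical.
From Coquelicot Require Import Coquelicot.
Open Scope R_scope.

Lemma sum_f_R0_trunc (f : nat -> R) (N M : nat) :
  (N <= M)%nat -> (forall j, (N < j <= M)%nat -> f j = 0) ->
  sum_f_R0 f M = sum_f_R0 f N.
Proof.
  intros HNM. induction M as [|M IH]; intros Hz.
  - replace N with 0%nat by lia. reflexivity.
  - destruct (Nat.eq_dec N (S M)) as [->|Hne]; [reflexivity|].
    rewrite tech5, Hz by lia. rewrite IH by (try lia; intros; apply Hz; lia). ring.
Qed.

Lemma sum_f_R0_nonneg (f : nat -> R) N :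
  (forall j, (j <= N)%nat -> 0 <= f j) -> 0 <= sum_f_R0 f N.
Proof.
  induction N as [|N IH]; intros H; simpl.
  - apply H; lia.
  - apply Rplus_le_le_0_compat; [apply IH; intros; apply H; lia | apply H; lia].
Qed.

Lemma sum_f_R0_ge_first (f : nat -> R) N :
  (forall j, (j <= N)%nat -> 0 <= f j) -> f 0%nat <= sum_f_R0 f N.
Proof.
  induction N as [|N IH]; intros H; simpl.
  - lra.
  - assert (0 <= f (S N)) by (apply H; lia).
    assert (f 0%nat <= sum_f_R0 f N) by (apply IH; intros; apply H; lia). lra.
Qed.

Lemma continuous_sum_f_R0 (f : nat -> R -> R) N x :
  (forall j, continuous (f j) x) -> continuous (fun y => sum_f_R0 (fun j => f j y) N) x.
Proof.
  intros H. induction N as [|N IH]; simpl; [apply H|].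
  apply (continuous_plus (fun y => sum_f_R0 (fun j => f j y) N) (fun y => f (S N) y)); auto.
Qed.

Lemma continuous_monomial (c : R) (a b : nat) x :
  continuous (fun y => c * y ^ a * (1 - y) ^ b) x.
Proof. apply (@ex_derive_continuous R_AbsRing R_NormedModule). auto_derive. auto. Qed.

Lemma C_nonneg n k : 0 <= Binomial.C n k.
Proof.
  unfold Binomial.C. apply Rlt_le, Rdiv_lt_0_compat; [apply INR_fact_lt_0|].
  apply Rmult_lt_0_compat; apply INR_fact_lt_0.
Qed.

Lemma pow_pred x n : (0 < n)%nat -> x ^ n = x * x ^ (n - 1).
Proof. intros H. replace n with (S (n - 1)) at 1 by lia. reflexivity. Qed.

(** The polynomials of the model *)

(* T_l(u) = l * u * rpoly u and p_l = 1 - l * rpoly l. *)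
Definition rpoly (d K : nat) (v : R) : R :=
  / INR K * sum_f_R0 (fun j => INR (K - j) * Binomial.C d j * v ^ (d - j - 1) * (1 - v) ^ j) (K - 1).

(* rpoly v = v^(d-K) * spoly v: the order of vanishing of rpoly at 0. *)
Definition spoly (d K : nat) (v : R) : R :=
  / INR K * sum_f_R0 (fun j => INR (K - j) * Binomial.C d j * v ^ (K - 1 - j) * (1 - v) ^ j) (K - 1).

(* Coefficients of 1 - rpoly in the Bernstein basis of degree d-1. *)
Definition ecoef (d K j : nat) : R :=
  Binomial.C (d - 1) j - INR (K - j) / INR K * Binomial.C d j.

(* 1 - rpoly v = (1 - v) * qpoly v: the order of vanishing of 1 - rpoly at 1. *)
Definition qpoly (d K : nat) (v : R) : R :=
  sum_f_R0 (fun j => ecoef d K (S j) * (1 - v) ^ j * v ^ (d - 2 - j)) (d - 2).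

Lemma rpoly_continuous d K x : continuous (rpoly d K) x.
Proof.
  apply (continuous_mult (fun _ => / INR K)); [apply continuous_const|].
  apply (continuous_sum_f_R0 (fun j y => INR (K - j) * Binomial.C d j * y ^ (d - j - 1) * (1 - y) ^ j)).
  intros j. apply continuous_monomial.
Qed.

Lemma spoly_continuous d K x : continuous (spoly d K) x.
Proof.
  apply (continuous_mult (fun _ => / INR K)); [apply continuous_const|].
  apply (continuous_sum_f_R0 (fun j y => INR (K - j) * Binomial.C d j * y ^ (K - 1 - j) * (1 - y) ^ j)).
  intros j. apply continuous_monomial.
Qed.

Lemma qpoly_continuous d K x : continuous (qpoly d K) x.
Proof.
  apply (continuous_sum_f_R0 (fun j y => ecoef d K (S j) * (1 - y) ^ j * y ^ (d - 2 - j))).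
  intros j. apply (@ex_derive_continuous R_AbsRing R_NormedModule). auto_derive. auto.
Qed.

Section Polynomials.
Variables d K : nat.
Hypothesis HK : (1 <= K)%nat.
Hypothesis HKd : (K < d)%nat.

Lemma INR_K_pos : 0 < INR K.
Proof. apply lt_0_INR; lia. Qed.

Lemma Tl_rpoly l u : Tl d K l u = l * (u * rpoly d K u).
Proof.
  unfold Tl, rpoly.
  rewrite (sum_eq _ (fun i => (INR (K - i) * Binomial.C d i * u ^ (d - i - 1) * (1 - u) ^ i) * u)).
  - rewrite <- scal_sum. unfold Rdiv. ring.
  - intros i Hi. rewrite (pow_pred u (d - i)) by lia. ring.
Qed.

Lemma p_idle_rpoly l : p_idle d K l = 1 - l * rpoly d K l.
Proof.
  unfold p_idle, rpoly.
  rewrite (sum_eq _ (fun i => (INR (K - i) * Binomial.C d i * l ^ (d - i - 1) * (1 - l) ^ i) * (l / INR K))).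
  - rewrite <- scal_sum. unfold Rdiv. ring.
  - intros i Hi. rewrite (pow_pred l (d - i)) by lia. unfold Rdiv. ring.
Qed.

(* Each term of rpoly carries at least the power v^(d-K). *)
Lemma rpoly_spoly v : rpoly d K v = v ^ (d - K) * spoly d K v.
Proof.
  unfold rpoly, spoly.
  rewrite (sum_eq _ (fun i => (INR (K - i) * Binomial.C d i * v ^ (K - 1 - i) * (1 - v) ^ i) * v ^ (d - K))).
  - rewrite <- scal_sum. ring.
  - intros i Hi. replace (d - i - 1)%nat with ((K - 1 - i) + (d - K))%nat by lia.
    rewrite pow_add. ring.
Qed.

(* Only the term j = K-1 survives at 0. *)
Lemma spoly0_pos : 0 < spoly d K 0.
Proof.
  assert (E : spoly d K 0 = / INR K * Binomial.C d (K - 1)).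
  { unfold spoly. f_equal.
    rewrite (sum_eq _ (fun j => if Nat.eq_dec j (K - 1) then Binomial.C d (K - 1) else 0)).
    - destruct (K - 1)%nat as [|k]; [reflexivity|].
      rewrite tech5. destruct (Nat.eq_dec (S k) (S k)); [|lia].
      rewrite (sum_eq _ (fun _ => 0)), sum_cte; [ring|].
      intros i Hi. destruct (Nat.eq_dec i (S k)); [lia | reflexivity].
    - intros i Hi. destruct (Nat.eq_dec i (K - 1)) as [->|Hne].
      + replace (K - (K - 1))%nat with 1%nat by lia.
        replace (K - 1 - (K - 1))%nat with 0%nat by lia.
        rewrite pow_O, Rminus_0_r, pow1, INR_1. ring.
      + replace (K - 1 - i)%nat with (S (K - 1 - i - 1)) by lia. simpl. ring. }
  rewrite E. apply Rmult_lt_0_compat; [apply Rinv_0_lt_compat, INR_K_pos|].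
  unfold Binomial.C. apply Rdiv_lt_0_compat; [apply INR_fact_lt_0|].
  apply Rmult_lt_0_compat; apply INR_fact_lt_0.
Qed.

(* rpoly vanishes at 0 since d - j - 1 >= 1 for j < K. *)
Lemma rpoly0 : rpoly d K 0 = 0.
Proof.
  unfold rpoly. rewrite (sum_eq _ (fun _ => 0)), sum_cte; [ring|].
  intros i Hi. replace (d - i - 1)%nat with (S (d - i - 2)) by lia. simpl. ring.
Qed.

Lemma rpoly_nonneg v : 0 <= v <= 1 -> 0 <= rpoly d K v.
Proof.
  intros Hv. apply Rmult_le_pos; [apply Rlt_le, Rinv_0_lt_compat, INR_K_pos|].
  apply sum_f_R0_nonneg. intros j Hj.
  apply Rmult_le_pos; [apply Rmult_le_pos; [apply Rmult_le_pos|]|];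
    [apply pos_INR | apply C_nonneg | apply pow_le; lra | apply pow_le; lra].
Qed.

Lemma ecoef_nonneg j : (j <= d - 1)%nat -> 0 <= ecoef d K j.
Proof.
  intros Hj. unfold ecoef.
  assert (Hpascal : Binomial.C d j = INR d / INR (d - j) * Binomial.C (d - 1) j)
    by (replace d with (S (d - 1)) at 1 2 3 by lia; apply pascal_step2; lia).
  rewrite Hpascal.
  assert (H0 := C_nonneg (d - 1) j).
  assert (HKp := INR_K_pos).
  destruct (Compare_dec.le_lt_dec K j) as [HjK|HjK].
  - replace (K - j)%nat with 0%nat by lia. simpl. lra.
  - assert (Hdj : 0 < INR d - INR j) by (rewrite <- minus_INR by lia; apply lt_0_INR; lia).
    rewrite !minus_INR by lia.
    assert (INR j <= INR K) by (apply le_INR; lia).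
    assert (INR K <= INR d) by (apply le_INR; lia).
    assert (0 <= INR j) by apply pos_INR.
    assert (Hf : (INR K - INR j) / INR K * (INR d / (INR d - INR j)) <= 1).
    { rewrite <- Rmult_1_r. apply Rmult_le_reg_r with (INR K * (INR d - INR j)); [nra|].
      field_simplify; nra. }
    nra.
Qed.

Lemma ecoef1 : ecoef d K 1 = INR (d - K) / INR K.
Proof.
  unfold ecoef. rewrite (pascal_step3 (d - 1) 0), (pascal_step3 d 0) by lia.
  rewrite !C_n_0, !minus_INR by lia. simpl. assert (HKp := INR_K_pos). field. lra.
Qed.

Lemma ecoef1_pos : 0 < ecoef d K 1.
Proof. rewrite ecoef1. apply Rdiv_lt_0_compat; [apply lt_0_INR; lia | apply INR_K_pos]. Qed.

(* Expand 1 = (v + (1-v))^(d-1) and subtract rpoly term by term: the j = 0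
   coefficients cancel. *)
Lemma one_minus_rpoly v : 1 - rpoly d K v = (1 - v) * qpoly d K v.
Proof.
  assert (HKp := INR_K_pos).
  assert (Hone : 1 = sum_f_R0 (fun i => Binomial.C (d - 1) i * (1 - v) ^ i * v ^ (d - 1 - i)) (d - 1)).
  { rewrite <- binomial. replace (1 - v + v) with 1 by ring. now rewrite pow1. }
  assert (Hr : rpoly d K v = sum_f_R0 (fun i => INR (K - i) / INR K * Binomial.C d i * (1 - v) ^ i * v ^ (d - 1 - i)) (d - 1)).
  { rewrite (sum_f_R0_trunc _ (K - 1) (d - 1)); [| lia |].
    - unfold rpoly. rewrite scal_sum. apply sum_eq. intros i Hi.
      replace (d - i - 1)%nat with (d - 1 - i)%nat by lia. unfold Rdiv. ring.
    - intros j Hj. replace (K - j)%nat with 0%nat by lia. simpl. unfold Rdiv. ring. }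
  rewrite Hr. pattern 1 at 1. rewrite Hone, <- minus_sum, decomp_sum by lia.
  replace (Binomial.C (d - 1) 0 * (1 - v) ^ 0 * v ^ (d - 1 - 0) -
     INR (K - 0) / INR K * Binomial.C d 0 * (1 - v) ^ 0 * v ^ (d - 1 - 0)) with 0
    by (rewrite !C_n_0; replace (K - 0)%nat with K by lia; field; lra).
  unfold qpoly. rewrite scal_sum. replace (Init.Nat.pred (d - 1)) with (d - 2)%nat by lia.
  rewrite Rplus_0_l. apply sum_eq. intros i Hi. unfold ecoef.
  replace (d - 1 - S i)%nat with (d - 2 - i)%nat by lia. simpl. ring.
Qed.

(* Only the j = 0 term of qpoly survives at 1: q(1) = (d-K)/K. *)
Lemma qpoly1 : qpoly d K 1 = ecoef d K 1.
Proof.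
  unfold qpoly. rewrite (sum_f_R0_trunc _ 0 (d - 2)); [| lia |].
  - simpl. rewrite pow1. ring.
  - intros j Hj. rewrite Rminus_diag, pow_i by lia. ring.
Qed.

(* qpoly v >= ecoef 1 * v^(d-2) > 0 for v > 0, and qpoly 0 = 1. *)
Lemma qpoly_pos v : 0 <= v <= 1 -> 0 < qpoly d K v.
Proof.
  intros Hv. destruct (Req_dec v 0) as [->|Hne].
  - assert (H := one_minus_rpoly 0). rewrite rpoly0 in H. lra.
  - eapply Rlt_le_trans with (ecoef d K 1 * v ^ (d - 2)).
    + apply Rmult_lt_0_compat; [apply ecoef1_pos | apply pow_lt; lra].
    + assert (H := sum_f_R0_ge_first (fun j => ecoef d K (S j) * (1 - v) ^ j * v ^ (d - 2 - j)) (d - 2)).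
      cbv beta in H. rewrite pow_O, Nat.sub_0_r, Rmult_1_r in H. apply H.
      intros j Hj. repeat apply Rmult_le_pos; try (apply pow_le; lra).
      apply ecoef_nonneg; lia.
Qed.

(* From 1 - r = (1-v) q with q > 0. *)
Lemma rpoly_le1 v : 0 <= v <= 1 -> rpoly d K v <= 1.
Proof.
  intros Hv. assert (H := one_minus_rpoly v). assert (H2 := qpoly_pos v Hv).
  assert (0 <= (1 - v) * qpoly d K v) by (apply Rmult_le_pos; lra). lra.
Qed.

Lemma denom_bounds l v : 0 < l < 1 -> 0 <= v <= 1 ->
  1 - l <= 1 - l * rpoly d K v <= 1.
Proof.
  intros Hl Hv. assert (H1 := rpoly_le1 v Hv). assert (H2 := rpoly_nonneg v Hv). nra.
Qed.

End Polynomials.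

Section FilterLimits.
Context {T : Type} {F : (T -> Prop) -> Prop} {FF : Filter F}.

Lemma filterlim_Rplus (f g : T -> R) a b :
  filterlim f F (locally a) -> filterlim g F (locally b) ->
  filterlim (fun x => f x + g x) F (locally (a + b)).
Proof.
  intros Hf Hg. eapply filterlim_comp_2; [exact Hf | exact Hg |].
  apply (@filterlim_plus R_AbsRing R_NormedModule).
Qed.

Lemma filterlim_Rmult (f g : T -> R) a b :
  filterlim f F (locally a) -> filterlim g F (locally b) ->
  filterlim (fun x => f x * g x) F (locally (a * b)).
Proof.
  intros Hf Hg. eapply filterlim_comp_2; [exact Hf | exact Hg |].
  apply (@filterlim_mult R_AbsRing).
Qed.

Lemma filterlim_Rinv (f : T -> R) a :
  filterlim f F (locally a) -> a <> 0 -> filterlim (fun x => / f x) F (locally (/ a)).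
Proof. intros Hf Ha. eapply filterlim_comp; [exact Hf | apply continuous_Rinv; auto]. Qed.

Lemma filterlim_Ropp (f : T -> R) a :
  filterlim f F (locally a) -> filterlim (fun x => - f x) F (locally (- a)).
Proof.
  intros Hf. eapply filterlim_comp; [exact Hf |].
  apply (continuous_opp (fun y : R => y)), continuous_id.
Qed.

Lemma filterlim_Rabs (h : T -> R) a :
  filterlim h F (locally a) <-> (forall e, 0 < e -> F (fun x => Rabs (h x - a) < e)).
Proof.
  split.
  - intros Hh e He. apply (Hh (fun y => Rabs (y - a) < e)).
    exists (mkposreal e He). intros y Hy. exact Hy.
  - intros H P [eps HP]. unfold filtermap.
    generalize (H eps (cond_pos eps)). apply filter_imp. intros x Hx. apply HP. exact Hx.
Qed.

Lemma filterlim_squeeze (lo h hi : T -> R) a :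
  F (fun x => lo x <= h x <= hi x) ->
  filterlim lo F (locally a) -> filterlim hi F (locally a) -> filterlim h F (locally a).
Proof.
  intros Hb Hlo Hhi. apply filterlim_Rabs. intros e He.
  apply filterlim_Rabs with (e := e) in Hlo; [|exact He].
  apply filterlim_Rabs with (e := e) in Hhi; [|exact He].
  generalize (filter_and _ _ Hb (filter_and _ _ Hlo Hhi)). apply filter_imp.
  intros x [[H1 H2] [H3 H4]].
  apply Rabs_lt_between in H3. apply Rabs_lt_between in H4. apply Rabs_lt_between. lra.
Qed.

End FilterLimits.

Lemma at_right_interval (P : R -> Prop) a dl :
  0 < dl -> (forall y, a < y < a + dl -> P y) -> at_right a P.
Proof.
  intros Hdl H. exists (mkposreal dl Hdl). intros y Hy Hay. apply H.
  change (Rabs (y - a) < dl) in Hy. apply Rabs_lt_between in Hy. lra.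
Qed.

Lemma at_left_interval (P : R -> Prop) a dl :
  0 < dl -> (forall y, a - dl < y < a -> P y) -> at_left a P.
Proof.
  intros Hdl H. exists (mkposreal dl Hdl). intros y Hy Hay. apply H.
  change (Rabs (y - a) < dl) in Hy. apply Rabs_lt_between in Hy. lra.
Qed.

Lemma continuous_at_right (g : R -> R) a :
  continuous g a -> filterlim g (at_right a) (locally (g a)).
Proof. intros Hg. eapply filterlim_filter_le_1; [apply filter_le_within | exact Hg]. Qed.

Lemma continuous_at_left (g : R -> R) a :
  continuous g a -> filterlim g (at_left a) (locally (g a)).
Proof. intros Hg. eapply filterlim_filter_le_1; [apply filter_le_within | exact Hg]. Qed.

Lemma continuous_delta (g : R -> R) x e : continuous g x -> 0 < e ->
  exists dl, 0 < dl /\ forall y, Rabs (y - x) < dl -> Rabs (g y - g x) < e.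
Proof.
  intros Hc He.
  destruct (Hc (fun z => Rabs (z - g x) < e)) as [dl Hdl].
  { exists (mkposreal e He). intros z Hz. exact Hz. }
  exists dl. split; [apply cond_pos | intros y Hy; apply (Hdl y), Hy].
Qed.

Lemma ln_le_sub1 y : 0 < y -> ln y <= y - 1.
Proof.
  intros Hy. destruct (Req_dec y 1) as [->|Hn]; [rewrite ln_1; lra|].
  assert (H := exp_ineq1 (y - 1) ltac:(lra)).
  rewrite <- (ln_exp (y - 1)). left. apply ln_increasing; lra.
Qed.

Lemma mln_bounds x : 0 <= x < 1 -> x <= - ln (1 - x) <= x / (1 - x).
Proof.
  intros Hx. split.
  - assert (H := ln_le_sub1 (1 - x) ltac:(lra)). lra.
  - assert (H := ln_le_sub1 (/ (1 - x)) ltac:(apply Rinv_0_lt_compat; lra)).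
    rewrite ln_Rinv in H by lra. replace (x / (1 - x)) with (/ (1 - x) - 1) by (field; lra). lra.
Qed.

Lemma reciprocal_perturbation k t : 0 < k -> 0 < t ->
  exists e, 0 < e <= k / 2 /\ 1 / k - t / 8 <= 1 / (k + e) /\ 1 / (k - e) <= 1 / k + t / 4.
Proof.
  intros Hk Ht. set (e := Rmin (k / 2) (t * k * k / 8)). exists e.
  assert (H1 := Rmin_l (k / 2) (t * k * k / 8)). assert (H2 := Rmin_r (k / 2) (t * k * k / 8)).
  assert (Htk : 0 < t * k * k) by (apply Rmult_lt_0_compat; [apply Rmult_lt_0_compat|]; lra).
  assert (H0 : 0 < e) by (unfold e; apply Rmin_glb_lt; lra). fold e in H1, H2.
  split; [lra|]. split.
  - assert (E : 1 / k - 1 / (k + e) = e / (k * (k + e))) by (field; lra).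
    assert (e / (k * (k + e)) <= e / (k * k)).
    { unfold Rdiv. apply Rmult_le_compat_l; [lra | apply Rinv_le_contravar; nra]. }
    assert (e / (k * k) <= t / 8).
    { apply Rmult_le_reg_r with (k * k); [nra|].
      unfold Rdiv. rewrite Rmult_assoc, Rinv_l by nra. nra. }
    lra.
  - assert (E : 1 / (k - e) - 1 / k = e / (k * (k - e))) by (field; lra).
    assert (e / (k * (k - e)) <= e / (k * (k / 2))).
    { unfold Rdiv. apply Rmult_le_compat_l; [lra | apply Rinv_le_contravar; nra]. }
    assert (e / (k * (k / 2)) <= t / 4).
    { apply Rmult_le_reg_r with (k * (k / 2)); [nra|].
      unfold Rdiv. rewrite Rmult_assoc, Rinv_l by nra. nra. }
    lra.
Qed.

Lemma nondecreasing_of_derive (g dg : R -> R) a b : a <= b ->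
  (forall x, a < x < b -> is_derive g x (dg x)) ->
  (forall x, a <= x <= b -> continuous g x) ->
  (forall x, a <= x <= b -> 0 <= dg x) -> g a <= g b.
Proof.
  intros Hab Hd Hc Hp.
  destruct (MVT_gen g a b dg) as [c [Hc1 Hc2]].
  - intros x Hx. rewrite Rmin_left, Rmax_right in Hx by lra. apply Hd; lra.
  - intros x Hx. rewrite Rmin_left, Rmax_right in Hx by lra.
    apply continuity_pt_filterlim, Hc; lra.
  - rewrite Rmin_left, Rmax_right in Hc1 by lra.
    assert (0 <= dg c * (b - a)) by (apply Rmult_le_pos; [apply Hp; lra | lra]). lra.
Qed.

Lemma constant_of_derive0 (g : R -> R) a b : a <= b ->
  (forall x, a < x < b -> is_derive g x 0) ->
  (forall x, a <= x <= b -> continuous g x) -> g b = g a.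
Proof.
  intros Hab Hd Hc.
  assert (g a <= g b) by (apply (nondecreasing_of_derive g (fun _ => 0)); auto; intros; lra).
  assert (- g a <= - g b).
  { apply (nondecreasing_of_derive (fun x => - g x) (fun _ => - 0)); [exact Hab | | | intros; lra].
    - intros x Hx. apply (is_derive_opp g), Hd, Hx.
    - intros x Hx. apply (continuous_opp g), Hc, Hx. }
  lra.
Qed.

Lemma nonpos_at_endpoint (g : R -> R) M : 0 < M -> continuous g M ->
  (forall s, 0 <= s < M -> g s <= 0) -> g M <= 0.
Proof.
  intros HM Hc H. destruct (Rle_dec (g M) 0) as [|Hn]; auto.
  exfalso. destruct (continuous_delta g M (g M) Hc) as [dl [Hdl Hy]]; [lra|].
  set (s := M - Rmin dl M / 2).
  assert (Hm1 : Rmin dl M <= dl) by apply Rmin_l. assert (Hm2 : Rmin dl M <= M) by apply Rmin_r.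
  assert (Hm3 : 0 < Rmin dl M) by (apply Rmin_glb_lt; lra).
  assert (H1 := H s ltac:(unfold s; lra)).
  assert (H2 := Hy s ltac:(unfold s; rewrite Rabs_left by lra; lra)).
  apply Rabs_lt_between in H2. lra.
Qed.

Lemma real_induction (P : R -> Prop) :
  (forall M, 0 <= M -> (forall s, 0 <= s < M -> P s) -> P M) ->
  (forall M, 0 <= M -> P M -> exists dl, 0 < dl /\ forall s, M < s <= M + dl -> P s) ->
  forall w, 0 <= w -> P w.
Proof.
  intros Hclosed Hstep. apply NNPP. intros Hn.
  apply not_all_ex_not in Hn. destruct Hn as [w0 Hw0].
  apply imply_to_and in Hw0. destruct Hw0 as [Hw0 Hnot].
  set (Good := fun x => 0 <= x /\ forall s, 0 <= s <= x -> P s).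
  assert (HG0 : Good 0).
  { split; [lra|]. intros s Hs. replace s with 0 by lra. apply Hclosed; [lra | intros; lra]. }
  assert (Hbd : bound Good).
  { exists w0. intros x [Hx Hgx]. destruct (Rle_dec x w0); auto.
    exfalso. apply Hnot, Hgx. lra. }
  destruct (completeness Good Hbd (ex_intro _ 0 HG0)) as [M [HMub HMl]].
  assert (HM0 : 0 <= M) by (apply HMub; exact HG0).
  assert (Hbelow : forall s, 0 <= s < M -> P s).
  { intros s Hs. destruct (classic (exists x, Good x /\ s < x)) as [[x [[_ Hx] Hsx]]|Hne].
    - apply Hx. lra.
    - exfalso. assert (M <= s); [|lra]. apply HMl. intros x Hx.
      destruct (Rle_dec x s); auto. exfalso. apply Hne. exists x. split; auto. lra. }
  assert (HM : forall s, 0 <= s <= M -> P s).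
  { intros s Hs. destruct (Req_dec s M) as [->|Hne]; [apply Hclosed; auto | apply Hbelow; lra]. }
  destruct (Hstep M HM0 (HM M ltac:(lra))) as [dl [Hdl Hbeyond]].
  assert (HG : Good (M + dl)).
  { split; [lra|]. intros s Hs. destruct (Rle_dec s M); [apply HM; lra | apply Hbeyond; lra]. }
  assert (M + dl <= M) by (apply HMub; exact HG). lra.
Qed.

Lemma exp_weighted_nondecreasing (g D : R -> R) k a b : a <= b ->
  (forall x, a < x < b -> is_derive g x (D x)) ->
  (forall x, a <= x <= b -> continuous g x) ->
  (forall x, a <= x <= b -> 0 <= k * g x + D x) ->
  exp (k * a) * g a <= exp (k * b) * g b.
Proof.
  intros Hab Hd Hc Hp.
  apply (nondecreasing_of_derive (fun w => exp (k * w) * g w)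
           (fun x => exp (k * x) * (k * g x + D x))); [exact Hab | | |].
  - intros x Hx.
    assert (He : is_derive (fun w => exp (k * w)) x (k * exp (k * x)))
      by (auto_derive; [auto | ring]).
    assert (H := is_derive_mult _ g x _ _ He (Hd x Hx) (fun a b => Rmult_comm a b)).
    replace (exp (k * x) * (k * g x + D x))
      with (plus (scal (k * exp (k * x)) (g x)) (scal (exp (k * x)) (D x)))
      by (simpl; unfold plus, scal, mult; simpl; unfold mult; simpl; ring).
    exact H.
  - intros x Hx. apply (continuous_mult (fun w => exp (k * w)) g); [|apply Hc, Hx].
    apply (@ex_derive_continuous R_AbsRing R_NormedModule). auto_derive. auto.
  - intros x Hx. apply Rmult_le_pos; [apply Rlt_le, exp_pos | apply Hp, Hx].
Qed.

Lemma is_RInt_gen_of_lim (h I : R -> R) L :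
  (forall b, 0 < b -> is_RInt h 0 b (I b)) ->
  filterlim I (Rbar_locally p_infty) (locally L) ->
  is_RInt_gen h (at_point 0) (Rbar_locally p_infty) L.
Proof.
  intros HI Hlim P HP. destruct (Hlim P HP) as [M HM].
  apply (Filter_prod _ _ _ (fun x => x = 0) (fun b => Rmax 0 M < b)).
  - reflexivity.
  - exists (Rmax 0 M). auto.
  - intros x y -> Hy. exists (I y). split.
    + apply HI. assert (0 <= Rmax 0 M) by apply Rmax_l. lra.
    + apply HM. assert (M <= Rmax 0 M) by apply Rmax_r. lra.
Qed.

Lemma ex_RInt_unit (g : R -> R) a b : (forall v, 0 <= v <= 1 -> continuous g v) ->
  0 <= a <= 1 -> 0 <= b <= 1 -> ex_RInt g a b.
Proof.
  intros Hg Ha Hb. apply (@ex_RInt_continuous R_CompleteNormedModule). intros z Hz. apply Hg.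
  split; [apply Rle_trans with (Rmin a b); [apply Rmin_glb; lra | lra]|].
  apply Rle_trans with (Rmax a b); [lra | apply Rmax_lub; lra].
Qed.

(** The closed form of the mean waiting time *)

(* int_0^l r(v) / (1 - l r(v)) dv, which will turn out to be E[W_l]. *)
Definition Ewait (d K : nat) (l : R) : R :=
  RInt (fun v => rpoly d K v / (1 - l * rpoly d K v)) 0 l.

Section Integrands.
Variables d K : nat.
Hypothesis HK : (1 <= K)%nat.
Hypothesis HKd : (K < d)%nat.
Variable l : R.
Hypothesis Hl : 0 < l < 1.

(* The integrands 1/(1 - l r) and r/(1 - l r) are continuous on [0,1], where
   the denominator is at least 1 - l > 0. *)
Lemma inv_denom_continuous v : 0 <= v <= 1 -> continuous (fun v => / (1 - l * rpoly d K v)) v.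
Proof.
  intros Hv. apply (continuous_Rinv_comp (fun v => 1 - l * rpoly d K v)).
  - apply (continuous_minus (fun _ => 1) (fun v => l * rpoly d K v)); [apply continuous_const|].
    apply (continuous_mult (fun _ => l) (rpoly d K)); [apply continuous_const | apply rpoly_continuous].
  - assert (H := denom_bounds d K HK HKd l v Hl Hv). lra.
Qed.

Lemma Ewait_integrand_continuous v : 0 <= v <= 1 ->
  continuous (fun v => rpoly d K v / (1 - l * rpoly d K v)) v.
Proof.
  intros Hv. apply (continuous_mult (rpoly d K) (fun v => / (1 - l * rpoly d K v))).
  - apply rpoly_continuous.
  - apply inv_denom_continuous, Hv.
Qed.

End Integrands.

(** The solution of the mean-field ODE *)

Section OdeSolution.
Variables d K : nat.
Hypothesis HK : (1 <= K)%nat.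
Hypothesis HKd : (K < d)%nat.
Variable l : R.
Hypothesis Hl : 0 < l < 1.
Variable f : R -> R.
Hypothesis Hf : solves_ode d K l f.

(* The solution, extended by its initial value l on (-oo,0]: continuous on R. *)
Definition Fext (w : R) : R := f (Rmax w 0).

Lemma Fext_eq w : 0 <= w -> Fext w = f w.
Proof. intros H. unfold Fext. rewrite Rmax_left; auto. Qed.

Lemma Fext0 : Fext 0 = l.
Proof. rewrite Fext_eq by lra. apply Hf. Qed.

Lemma Fext_derive w : 0 < w ->
  is_derive Fext w (l * Fext w * rpoly d K (Fext w) - Fext w).
Proof.
  intros Hw. destruct Hf as [_ [_ Hd]].
  apply (is_derive_ext_loc f).
  - exists (mkposreal w Hw). intros t Ht. change (Rabs (t - w) < w) in Ht.
    apply Rabs_lt_between in Ht. rewrite Fext_eq by lra. reflexivity.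
  - rewrite Fext_eq by lra. replace (l * f w * rpoly d K (f w) - f w) with (Tl d K l (f w) - f w)
      by (rewrite (Tl_rpoly d K HK HKd); ring).
    apply Hd, Hw.
Qed.

(* Continuity: constant on (-oo,0), right-continuous at 0 by hypothesis,
   differentiable on (0,oo). *)
Lemma Fext_continuous w : continuous Fext w.
Proof.
  destruct (Rtotal_order w 0) as [Hw|[->|Hw]].
  - apply (continuous_ext_loc _ (fun _ => l)); [|apply continuous_const].
    exists (mkposreal (- w) ltac:(lra)). intros t Ht. change (Rabs (t - w) < - w) in Ht.
    apply Rabs_lt_between in Ht. unfold Fext. rewrite Rmax_right by lra. symmetry. apply Hf.
  - intros P HP. rewrite Fext0 in HP.
    destruct Hf as [Hf0 [Hlim _]]. destruct (Hlim P HP) as [dl Hdl].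
    exists dl. intros y Hy. unfold Fext. destruct (Rle_dec y 0) as [Hy0|Hy0].
    + rewrite Rmax_right, Hf0 by lra. apply (locally_singleton _ _ HP).
    + rewrite Rmax_left by lra. apply Hdl; [exact Hy | lra].
  - apply (@ex_derive_continuous R_AbsRing R_NormedModule). eexists. apply Fext_derive, Hw.
Qed.

Lemma exp_Fext_continuous k w : continuous (fun s => exp (k * s) * Fext s) w.
Proof.
  apply (continuous_mult (fun s => exp (k * s)) Fext); [|apply Fext_continuous].
  apply (@ex_derive_continuous R_AbsRing R_NormedModule). auto_derive. auto.
Qed.

Definition trapped (s : R) : Prop :=
  l <= exp s * Fext s /\ exp ((1 - l) * s) * Fext s <= l.

(* A trapped value lies in (0,1), since l < 1 <= e^((1-l) s). *)
Lemma trapped_range s : 0 <= s -> trapped s -> 0 < Fext s < 1.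
Proof.
  intros Hs [Hlo Hhi].
  assert (He := exp_pos s). assert (He1 := exp_ineq1_le ((1 - l) * s)).
  assert (0 <= (1 - l) * s) by nra.
  assert (HF : 0 < Fext s) by nra. nra.
Qed.

(* Both bounds are closed conditions, so they pass to the limit at M. *)
Lemma trapped_closed M : 0 <= M -> (forall s, 0 <= s < M -> trapped s) -> trapped M.
Proof.
  intros HM Hbelow. destruct (Req_dec M 0) as [->|HM0].
  - unfold trapped. rewrite Fext0, Rmult_0_r, exp_0. lra.
  - split.
    + cut (l - exp M * Fext M <= 0); [lra|].
      apply (nonpos_at_endpoint (fun s => l - exp s * Fext s)); [lra | |].
      * apply (continuous_minus (fun _ => l) (fun s => exp s * Fext s)); [apply continuous_const|].
        apply (continuous_ext (fun s => exp (1 * s) * Fext s)); [intros; now rewrite Rmult_1_l|].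
        apply exp_Fext_continuous.
      * intros s Hs. destruct (Hbelow s Hs). lra.
    + cut (exp ((1 - l) * M) * Fext M - l <= 0); [lra|].
      apply (nonpos_at_endpoint (fun s => exp ((1 - l) * s) * Fext s - l)); [lra | |].
      * apply (continuous_minus (fun s => exp ((1 - l) * s) * Fext s) (fun _ => l));
          [apply exp_Fext_continuous | apply continuous_const].
      * intros s Hs. destruct (Hbelow s Hs). lra.
Qed.

(* While the solution stays in (0,1), e^w F(w) increases (as T_l >= 0) and
   e^((1-l) w) F(w) decreases (as T_l(u) <= l u). *)
Lemma trapped_step M : 0 <= M -> trapped M ->
  exists dl, 0 < dl /\ forall s, M < s <= M + dl -> trapped s.
Proof.
  intros HM [Hlo Hhi].
  assert (HM01 := trapped_range M HM (conj Hlo Hhi)).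
  destruct (continuous_delta Fext M (Rmin (Fext M) (1 - Fext M)) (Fext_continuous M))
    as [dl [Hdl Hnear]]; [apply Rmin_glb_lt; lra|].
  exists (dl / 2). split; [lra|]. intros s Hs.
  assert (Hin : forall x, M <= x <= s -> 0 <= Fext x <= 1).
  { intros x Hx. assert (H := Hnear x ltac:(rewrite Rabs_right; lra)).
    apply Rabs_lt_between in H.
    assert (Rmin (Fext M) (1 - Fext M) <= Fext M) by apply Rmin_l.
    assert (Rmin (Fext M) (1 - Fext M) <= 1 - Fext M) by apply Rmin_r. lra. }
  split.
  - assert (H := exp_weighted_nondecreasing Fext
      (fun x => l * Fext x * rpoly d K (Fext x) - Fext x) 1 M s ltac:(lra)).
    rewrite !Rmult_1_l in H. apply Rle_trans with (exp M * Fext M); [exact Hlo|]. apply H.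
    + intros x Hx. apply Fext_derive. lra.
    + intros x Hx. apply Fext_continuous.
    + intros x Hx. assert (H0 := Hin x Hx).
      assert (0 <= rpoly d K (Fext x)) by (apply rpoly_nonneg; auto).
      replace (1 * Fext x + (l * Fext x * rpoly d K (Fext x) - Fext x))
        with (l * Fext x * rpoly d K (Fext x)) by ring.
      apply Rmult_le_pos; [apply Rmult_le_pos|]; lra.
  - assert (H := exp_weighted_nondecreasing (fun x => - Fext x)
      (fun x => - (l * Fext x * rpoly d K (Fext x) - Fext x)) (1 - l) M s ltac:(lra)).
    apply Rle_trans with (exp ((1 - l) * M) * Fext M); [|exact Hhi].
    cut (exp ((1 - l) * M) * - Fext M <= exp ((1 - l) * s) * - Fext s); [lra|]. apply H.
    + intros x Hx. apply (is_derive_opp Fext), Fext_derive. lra.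
    + intros x Hx. apply (continuous_opp Fext), Fext_continuous.
    + intros x Hx. assert (H0 := Hin x Hx).
      assert (rpoly d K (Fext x) <= 1) by (apply rpoly_le1; auto).
      replace ((1 - l) * - Fext x + - (l * Fext x * rpoly d K (Fext x) - Fext x))
        with (l * Fext x * (1 - rpoly d K (Fext x))) by ring.
      apply Rmult_le_pos; [apply Rmult_le_pos|]; lra.
Qed.

Lemma Fext_trapped w : 0 <= w -> trapped w.
Proof. apply real_induction; [exact trapped_closed | exact trapped_step]. Qed.

Lemma Fext_range w : 0 <= w -> 0 < Fext w < 1.
Proof. intros Hw. apply trapped_range, Fext_trapped; exact Hw. Qed.

Lemma Fext_decay b : 0 <= b -> Fext b * (1 + (1 - l) * b) <= l.
Proof.
  intros Hb. destruct (Fext_trapped b Hb) as [_ Hhi].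
  assert (He := exp_ineq1_le ((1 - l) * b)). assert (HF := Fext_range b Hb). nra.
Qed.

(** The conservation law *)

Definition gdens (v : R) : R := l * (rpoly d K v / (1 - l * rpoly d K v)).

Definition Gpot (u : R) : R := RInt gdens 0 u.

Lemma gdens_continuous v : 0 <= v <= 1 -> continuous gdens v.
Proof.
  intros Hv. apply (continuous_mult (fun _ => l)); [apply continuous_const|].
  apply (Ewait_integrand_continuous d K HK HKd l Hl), Hv.
Qed.

Lemma gdens_bounds v : 0 <= v <= 1 -> 0 <= gdens v <= l / (1 - l).
Proof.
  intros Hv. assert (H1 := denom_bounds d K HK HKd l v Hl Hv).
  assert (rpoly d K v <= 1) by (apply rpoly_le1; auto).
  assert (0 <= rpoly d K v) by (apply rpoly_nonneg; auto).
  unfold gdens, Rdiv. split.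
  - apply Rmult_le_pos; [lra|]. apply Rmult_le_pos; [lra | apply Rlt_le, Rinv_0_lt_compat; lra].
  - apply Rmult_le_compat_l; [lra|]. rewrite <- (Rmult_1_l (/ (1 - l))).
    apply Rmult_le_compat; [lra | apply Rlt_le, Rinv_0_lt_compat; lra | lra |].
    apply Rinv_le_contravar; lra.
Qed.

Lemma Gpot_derive u : 0 < u < 1 -> is_derive Gpot u (gdens u).
Proof.
  intros Hu. apply (is_derive_RInt gdens Gpot 0 u).
  - exists (mkposreal (Rmin u (1 - u)) ltac:(apply Rmin_glb_lt; lra)). intros b Hb.
    change (Rabs (b - u) < Rmin u (1 - u)) in Hb. apply Rabs_lt_between in Hb.
    assert (Rmin u (1 - u) <= u) by apply Rmin_l. assert (Rmin u (1 - u) <= 1 - u) by apply Rmin_r.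
    apply (@RInt_correct R_CompleteNormedModule), ex_RInt_unit; [exact gdens_continuous | lra | lra].
  - apply gdens_continuous. lra.
Qed.

Lemma Gpot_bound u : 0 <= u <= 1 -> Rabs (Gpot u) <= u * (l / (1 - l)).
Proof.
  intros Hu. unfold Gpot. replace u with (u - 0) at 2 by ring.
  apply abs_RInt_le_const; [lra | apply ex_RInt_unit; [exact gdens_continuous | lra | lra] |].
  intros t Ht. assert (H := gdens_bounds t ltac:(lra)). rewrite Rabs_pos_eq; lra.
Qed.

Definition flux (w : R) : R := Tl d K l (Fext w).

Lemma flux_continuous w : continuous flux w.
Proof.
  apply (continuous_ext (fun w => l * (Fext w * rpoly d K (Fext w))));
    [intros; unfold flux; now rewrite (Tl_rpoly d K HK HKd)|].
  apply (continuous_mult (fun _ => l)); [apply continuous_const|].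
  apply (continuous_mult Fext (fun w => rpoly d K (Fext w))); [apply Fext_continuous|].
  apply (continuous_comp Fext (rpoly d K)); [apply Fext_continuous | apply rpoly_continuous].
Qed.

Definition cumflux (W : R) : R := RInt flux 0 W.

(* d/dW [int_0^W T_l(F) + G(F(W))] = T_l(F) + gdens(F) (T_l(F) - F) = 0. *)
Lemma conservation W : 0 <= W -> cumflux W + Gpot (Fext W) = Gpot l.
Proof.
  intros HW.
  assert (Hex : forall a b, ex_RInt flux a b)
    by (intros; apply (@ex_RInt_continuous R_CompleteNormedModule); intros; apply flux_continuous).
  assert (Hcum : forall x, is_derive cumflux x (flux x)).
  { intros x. apply (is_derive_RInt flux cumflux 0 x); [|apply flux_continuous].
    exists (mkposreal 1 Rlt_0_1). intros b _. apply (@RInt_correct R_CompleteNormedModule), Hex. }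
  assert (E0 : cumflux 0 + Gpot (Fext 0) = Gpot l)
    by (unfold cumflux; rewrite RInt_point, Fext0; simpl; unfold zero; simpl; ring).
  rewrite <- E0. apply (constant_of_derive0 (fun W => cumflux W + Gpot (Fext W))); [exact HW | |].
  - intros x Hx. assert (Hr := Fext_range x ltac:(lra)).
    assert (Hd := is_derive_plus _ _ x _ _ (Hcum x)
      (is_derive_comp Gpot Fext x _ _ (Gpot_derive (Fext x) Hr) (Fext_derive x ltac:(lra)))).
    replace 0 with (plus (flux x) (scal (l * Fext x * rpoly d K (Fext x) - Fext x) (gdens (Fext x))));
      [exact Hd|].
    assert (H3 := denom_bounds d K HK HKd l (Fext x) Hl ltac:(lra)).
    unfold flux, gdens. rewrite (Tl_rpoly d K HK HKd).
    simpl; unfold plus, scal, mult; simpl; unfold mult; simpl. field. lra.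
  - intros x Hx. apply (continuous_plus cumflux (fun w => Gpot (Fext w))).
    + apply (@ex_derive_continuous R_AbsRing R_NormedModule). eexists. apply Hcum.
    + apply (continuous_comp Fext Gpot); [apply Fext_continuous|].
      apply (@ex_derive_continuous R_AbsRing R_NormedModule). eexists.
      apply Gpot_derive, Fext_range. lra.
Qed.

(* G(F(b)) <= F(b) l/(1-l) <= l^2 / ((1-l)(1 + (1-l) b)) -> 0. *)
Lemma Gpot_Fext_vanishes :
  filterlim (fun b => Gpot (Fext b)) (Rbar_locally p_infty) (locally 0).
Proof.
  apply filterlim_Rabs. intros e He. set (q := l / (1 - l)).
  assert (Hq : 0 < q) by (unfold q; apply Rdiv_lt_0_compat; lra).
  exists (Rmax 0 (l * q / ((1 - l) * e))). intros b Hb.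
  assert (Hb0 : 0 < b) by (assert (H := Rmax_l 0 (l * q / ((1 - l) * e))); lra).
  assert (Hb1 : l * q < (1 - l) * e * b).
  { assert (H := Rmax_r 0 (l * q / ((1 - l) * e))).
    apply Rmult_lt_reg_r with (/ ((1 - l) * e)); [apply Rinv_0_lt_compat; nra|].
    replace ((1 - l) * e * b * / ((1 - l) * e)) with b by (field; split; lra). exact (Rle_lt_trans _ _ _ H Hb). }
  assert (Hr := Fext_range b ltac:(lra)). assert (Hdec := Fext_decay b ltac:(lra)).
  rewrite Rminus_0_r. apply Rle_lt_trans with (Fext b * q); [apply Gpot_bound; lra|].
  assert (Fext b * q * (1 + (1 - l) * b) <= l * q) by nra.
  nra.
Qed.

(* Step 2 of the proof: E[W_l] = int_0^oo T_l(F) / l = G(l) / l. *)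
Lemma EW_closed_form : EW d K l f = Ewait d K l.
Proof.
  assert (HI : is_RInt_gen (fun w => Tl d K l (f w)) (at_point 0) (Rbar_locally p_infty) (Gpot l)).
  { apply (is_RInt_gen_of_lim _ (fun b => Gpot l - Gpot (Fext b))).
    - intros b Hb. apply (is_RInt_ext flux).
      + intros x Hx. rewrite Rmin_left, Rmax_right in Hx by lra. unfold flux. now rewrite Fext_eq by lra.
      + replace (Gpot l - Gpot (Fext b)) with (cumflux b) by (rewrite <- (conservation b); lra).
        apply (@RInt_correct R_CompleteNormedModule), (@ex_RInt_continuous R_CompleteNormedModule).
        intros; apply flux_continuous.
    - assert (H := filterlim_Rplus (fun _ => Gpot l) (fun b => - Gpot (Fext b)) _ _
        (filterlim_const (Gpot l)) (filterlim_Ropp _ _ Gpot_Fext_vanishes)).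
      rewrite Ropp_0, Rplus_0_r in H. exact H. }
  unfold EW. rewrite (@is_RInt_gen_unique R_CompleteNormedModule _ _
    (Proper_StrongProper _ (at_point_filter (0 : R_UniformSpace)))
    (Proper_StrongProper _ (Rbar_locally_filter p_infty)) _ _ HI).
  unfold Gpot, gdens, Ewait. rewrite (RInt_scal (V := R_CompleteNormedModule)).
  - change (scal l ?x) with (l * x). field. lra.
  - apply ex_RInt_unit; [apply (Ewait_integrand_continuous d K HK HKd l Hl) | lra | lra].
Qed.

End OdeSolution.

(** Light traffic: l -> 0 *)

Lemma is_RInt_pow m l : is_RInt (fun v => v ^ m) 0 l (l ^ S m / INR (S m)).
Proof.
  assert (Hn : 0 < INR (S m)) by (apply lt_0_INR; lia).
  replace (l ^ S m / INR (S m)) with (minus (l ^ S m / INR (S m)) (0 ^ S m / INR (S m)))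
    by (unfold minus, plus, opp; simpl; unfold Rdiv; rewrite !Rmult_0_l; ring).
  apply (@is_RInt_derive R_CompleteNormedModule (fun v => v ^ S m / INR (S m))).
  - intros x _. auto_derive; [auto|].
    change (match m with 0%nat => 1 | S _ => INR m + 1 end) with (INR (S m)). field. lra.
  - intros x _. apply (@ex_derive_continuous R_AbsRing R_NormedModule). auto_derive. auto.
Qed.

Section LightTraffic.
Variables d K : nat.
Hypothesis HK : (1 <= K)%nat.
Hypothesis HKd : (K < d)%nat.

Lemma rpoly_ex_RInt a b : ex_RInt (rpoly d K) a b.
Proof.
  apply (@ex_RInt_continuous R_CompleteNormedModule). intros; apply rpoly_continuous.
Qed.

(* Bounds a <= spoly <= b on [0,l] integrate, through r = v^(d-K) s, to bounds
   on int_0^l r. *)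
Lemma RInt_rpoly_bounds l a b : 0 <= l ->
  (forall v, 0 <= v <= l -> a <= spoly d K v <= b) ->
  a * (l ^ S (d - K) / INR (S (d - K))) <= RInt (rpoly d K) 0 l
    <= b * (l ^ S (d - K) / INR (S (d - K))).
Proof.
  intros Hl Hb.
  assert (Hint : forall c, RInt (fun v => c * v ^ (d - K)) 0 l = c * (l ^ S (d - K) / INR (S (d - K)))).
  { intros c. apply (@is_RInt_unique R_CompleteNormedModule).
    exact (@is_RInt_scal R_NormedModule _ _ _ c _ (is_RInt_pow (d - K) l)). }
  assert (Hex : forall c, ex_RInt (fun v => c * v ^ (d - K)) 0 l)
    by (intros c; eexists; exact (@is_RInt_scal R_NormedModule _ _ _ c _ (is_RInt_pow (d - K) l))).
  rewrite <- !Hint.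
  assert (Hcmp : forall x, 0 <= x <= l ->
    a * x ^ (d - K) <= rpoly d K x <= b * x ^ (d - K)).
  { intros x Hx. rewrite (rpoly_spoly d K HK HKd).
    assert (0 <= x ^ (d - K)) by (apply pow_le; lra).
    destruct (Hb x Hx). split; rewrite (Rmult_comm _ (x ^ _)); apply Rmult_le_compat_l; auto. }
  split; apply RInt_le; auto using rpoly_ex_RInt; intros x Hx; apply Hcmp; lra.
Qed.

Lemma RInt_rpoly_asymptotics :
  filterlim (fun l => RInt (rpoly d K) 0 l / l ^ S (d - K)) (at_right 0)
    (locally (spoly d K 0 / INR (S (d - K)))).
Proof.
  set (n := INR (S (d - K))). set (c := spoly d K 0).
  apply filterlim_Rabs. intros e He.
  assert (Hn : 1 <= n) by (unfold n; rewrite S_INR; assert (H := pos_INR (d - K)); lra).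
  destruct (continuous_delta (spoly d K) 0 (e / 2) (spoly_continuous d K 0) ltac:(lra))
    as [dl [Hdl Hd]].
  apply (at_right_interval _ 0 dl Hdl). intros l Hl.
  destruct (RInt_rpoly_bounds l (c - e / 2) (c + e / 2) ltac:(lra)) as [Hb1 Hb2].
  { intros v Hv. assert (H := Hd v ltac:(rewrite Rminus_0_r, Rabs_pos_eq; lra)).
    apply Rabs_lt_between in H. fold c in H. lra. }
  fold n in Hb1, Hb2.
  assert (Hp : 0 < l ^ S (d - K)) by (apply pow_lt; lra).
  set (I := RInt (rpoly d K) 0 l) in *. set (p := l ^ S (d - K)) in *.
  assert (E1 : (c - e / 2) / n <= I / p).
  { apply Rmult_le_reg_r with p; [exact Hp|].
    unfold Rdiv in *. rewrite (Rmult_assoc I), (Rinv_l p), Rmult_1_r by lra. lra. }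
  assert (E2 : I / p <= (c + e / 2) / n).
  { apply Rmult_le_reg_r with p; [exact Hp|].
    unfold Rdiv in *. rewrite (Rmult_assoc I), (Rinv_l p), Rmult_1_r by lra. lra. }
  assert (E3 : (e / 2) / n <= e / 2).
  { unfold Rdiv. rewrite <- (Rmult_1_r (e * / 2)) at 2. apply Rmult_le_compat_l; [lra|].
    rewrite <- Rinv_1. apply Rinv_le_contravar; lra. }
  apply Rabs_lt_between. unfold Rdiv in *. split; nra.
Qed.

Lemma RInt_rpoly_ratio :
  filterlim (fun l => RInt (rpoly d K) 0 l / (l * rpoly d K l)) (at_right 0)
    (locally (1 / INR (S (d - K)))).
Proof.
  assert (Hc := spoly0_pos d K HK HKd).
  assert (Hn : 0 < INR (S (d - K))) by (apply lt_0_INR; lia).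
  apply (filterlim_ext_loc (fun l => (RInt (rpoly d K) 0 l / l ^ S (d - K)) * / spoly d K l)).
  - apply (at_right_interval _ 0 1 Rlt_0_1). intros l Hl. rewrite (rpoly_spoly d K HK HKd).
    unfold Rdiv. rewrite !Rinv_mult. simpl. rewrite Rinv_mult. ring.
  - replace (1 / INR (S (d - K))) with ((spoly d K 0 / INR (S (d - K))) * / spoly d K 0)
      by (field; split; lra).
    apply filterlim_Rmult; [apply RInt_rpoly_asymptotics|].
    apply filterlim_Rinv; [apply continuous_at_right, spoly_continuous | lra].
Qed.

(* Since 1 <= 1/(1 - l r) <= 1/(1-l) on [0,l]. *)
Lemma Ewait_bounds l : 0 < l < 1 ->
  RInt (rpoly d K) 0 l <= Ewait d K l <= RInt (rpoly d K) 0 l / (1 - l).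
Proof.
  intros Hl.
  assert (Hex := ex_RInt_unit _ 0 l (Ewait_integrand_continuous d K HK HKd l Hl) ltac:(lra) ltac:(lra)).
  assert (Hden : forall x, 0 <= x <= l -> 0 <= rpoly d K x /\ 1 - l <= 1 - l * rpoly d K x <= 1).
  { intros x Hx. split; [apply rpoly_nonneg; auto; lra | apply denom_bounds; auto; lra]. }
  unfold Ewait. split.
  - apply RInt_le; [lra | apply rpoly_ex_RInt | exact Hex |]. intros x Hx.
    destruct (Hden x ltac:(lra)) as [H1 H2].
    unfold Rdiv. rewrite <- (Rmult_1_r (rpoly d K x)) at 1. apply Rmult_le_compat_l; [exact H1|].
    rewrite <- Rinv_1. apply Rinv_le_contravar; lra.
  - unfold Rdiv at 2. rewrite Rmult_comm, <- (RInt_scal (V := R_CompleteNormedModule)) by apply rpoly_ex_RInt.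
    apply RInt_le; [lra | exact Hex | |].
    + apply (@ex_RInt_continuous R_CompleteNormedModule). intros z _.
      apply (continuous_scal_r (V := R_NormedModule)), rpoly_continuous.
    + intros x Hx. destruct (Hden x ltac:(lra)) as [H1 H2].
      change (scal (/ (1 - l)) (rpoly d K x)) with (/ (1 - l) * rpoly d K x).
      unfold Rdiv. rewrite (Rmult_comm (rpoly d K x)). apply Rmult_le_compat_r; [exact H1|].
      apply Rinv_le_contravar; lra.
Qed.

(* With x = l r(l) = 1 - p_l and rho = int_0^l r / x, the ratio
   E[W_l] / (-ln p_l) lies between rho (1-x) and rho / (1-l). *)
Lemma Ewait_ratio_bounds l : 0 < l < 1 -> 0 < l * rpoly d K l ->
  let rho := RInt (rpoly d K) 0 l / (l * rpoly d K l) in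
  rho * (1 - l * rpoly d K l) <= Ewait d K l / (- ln (1 - l * rpoly d K l)) <= rho * / (1 - l).
Proof.
  intros Hl Hxp rho.
  assert (Hx1 : l * rpoly d K l <= l).
  { assert (H := rpoly_le1 d K HK HKd l ltac:(lra)). nra. }
  unfold rho. set (x := l * rpoly d K l) in *.
  destruct (mln_bounds x ltac:(lra)) as [HP1 HP2]. set (P := - ln (1 - x)) in *.
  destruct (Ewait_bounds l Hl) as [HE1 HE2].
  set (I := RInt (rpoly d K) 0 l) in *. set (E := Ewait d K l) in *.
  assert (HI : 0 <= I).
  { apply RInt_ge_0; [lra | apply rpoly_ex_RInt | intros v Hv; apply rpoly_nonneg; auto; lra]. }
  assert (Hi1 : (1 - x) / x <= / P).
  { replace ((1 - x) / x) with (/ (x / (1 - x))) by (field; lra). apply Rinv_le_contravar; lra. }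
  assert (Hi2 : / P <= / x) by (apply Rinv_le_contravar; lra).
  assert (0 <= (1 - x) / x) by (apply Rlt_le, Rdiv_lt_0_compat; lra).
  split.
  - replace (I / x * (1 - x)) with (I * ((1 - x) / x)) by (field; lra).
    unfold Rdiv at 2. apply Rmult_le_compat; lra.
  - replace (I / x * / (1 - l)) with ((I / (1 - l)) * / x) by (field; lra).
    unfold Rdiv at 1. apply Rmult_le_compat; lra.
Qed.

Lemma light_traffic_limit :
  filterlim (fun l => Ewait d K l / (- ln (1 - l * rpoly d K l))) (at_right 0)
    (locally (1 / INR (S (d - K)))).
Proof.
  set (rho := fun l => RInt (rpoly d K) 0 l / (l * rpoly d K l)).
  assert (Hc := spoly0_pos d K HK HKd).
  assert (Hx : filterlim (fun l => l * rpoly d K l) (at_right 0) (locally 0)).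
  { replace 0 with (0 * rpoly d K 0) at 2 by ring.
    apply (continuous_at_right (fun l => l * rpoly d K l)).
    apply (continuous_mult (fun l => l) (rpoly d K)); [apply continuous_id | apply rpoly_continuous]. }
  apply (filterlim_squeeze (fun l => rho l * (1 - l * rpoly d K l)) _ (fun l => rho l * / (1 - l))).
  - destruct (continuous_delta (spoly d K) 0 (spoly d K 0 / 2) (spoly_continuous d K 0) ltac:(lra))
      as [dl [Hdl Hd]].
    apply (at_right_interval _ 0 (Rmin dl (1/2)) ltac:(apply Rmin_glb_lt; lra)). intros l Hl.
    assert (Hm1 := Rmin_l dl (1/2)). assert (Hm2 := Rmin_r dl (1/2)).
    apply Ewait_ratio_bounds; [lra|].
    assert (Hs := Hd l ltac:(rewrite Rminus_0_r, Rabs_pos_eq; lra)). apply Rabs_lt_between in Hs.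
    rewrite (rpoly_spoly d K HK HKd). apply Rmult_lt_0_compat; [lra|].
    apply Rmult_lt_0_compat; [apply pow_lt | ]; lra.
  - assert (H := filterlim_Rmult _ _ _ _ RInt_rpoly_ratio
      (filterlim_Rplus (fun _ => 1) _ _ _ (filterlim_const 1) (filterlim_Ropp _ _ Hx))).
    rewrite Ropp_0, Rplus_0_r, Rmult_1_r in H. exact H.
  - assert (Hid : filterlim (fun l => l) (at_right 0) (locally 0))
      by apply (continuous_at_right (fun l => l)), continuous_id.
    assert (H := filterlim_Rmult _ _ _ _ RInt_rpoly_ratio (filterlim_Rinv _ _
      (filterlim_Rplus (fun _ => 1) _ _ _ (filterlim_const 1) (filterlim_Ropp _ _ Hid)) ltac:(lra))).
    rewrite Ropp_0, Rplus_0_r, Rinv_1, Rmult_1_r in H. exact H.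
Qed.

End LightTraffic.

(** Heavy traffic: l -> 1 *)

Lemma neg_ln_pos l : 0 < l < 1 -> 0 < - ln (1 - l).
Proof.
  intros Hl. assert (H : ln (1 - l) < ln 1) by (apply ln_increasing; lra). rewrite ln_1 in H. lra.
Qed.

Lemma inv_neg_ln_vanishes : filterlim (fun l => / (- ln (1 - l))) (at_left 1) (locally 0).
Proof.
  apply filterlim_Rabs. intros e He.
  assert (Hq : 0 < exp (- / e)) by apply exp_pos.
  apply (at_left_interval _ 1 (Rmin (exp (- / e)) 1) ltac:(apply Rmin_glb_lt; lra)).
  intros l Hl. assert (H1 := Rmin_l (exp (- / e)) 1). assert (H2 := Rmin_r (exp (- / e)) 1).
  assert (Hln : ln (1 - l) < - / e) by (rewrite <- (ln_exp (- / e)); apply ln_increasing; lra).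
  assert (Hie : 0 < / e) by (apply Rinv_0_lt_compat; lra).
  rewrite Rminus_0_r, Rabs_pos_eq by (apply Rlt_le, Rinv_0_lt_compat; lra).
  rewrite <- (Rinv_inv e). apply Rinv_lt_contravar; nra.
Qed.

(* The explicit integral int_e^l dv / ((1-l) + l b (1-v)). *)
Definition log_integral (b e l : R) : R :=
  (ln ((1 - l) + l * b * (1 - e)) - ln ((1 - l) * (1 + l * b))) / (l * b).

Lemma is_RInt_log_integral b e l : 0 < b -> 0 < e < l -> l < 1 ->
  is_RInt (fun v => / ((1 - l) + l * b * (1 - v))) e l (log_integral b e l).
Proof.
  intros Hb He Hl.
  assert (Hpos : forall x, e <= x <= l -> 0 < 1 - l + l * b * (1 - x)).
  { intros x Hx. assert (0 < l * b * (1 - x)) by (apply Rmult_lt_0_compat; [apply Rmult_lt_0_compat|]; lra). lra. }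
  replace (log_integral b e l) with (minus (- ln ((1 - l) + l * b * (1 - l)) / (l * b))
                                          (- ln ((1 - l) + l * b * (1 - e)) / (l * b))).
  - apply (@is_RInt_derive R_CompleteNormedModule (fun v => - ln ((1 - l) + l * b * (1 - v)) / (l * b))).
    + intros x Hx. rewrite Rmin_left, Rmax_right in Hx by lra. assert (H := Hpos x Hx).
      auto_derive; [lra | field; lra].
    + intros x Hx. rewrite Rmin_left, Rmax_right in Hx by lra. assert (H := Hpos x Hx).
      apply (@ex_derive_continuous R_AbsRing R_NormedModule). auto_derive. lra.
  - unfold minus, plus, opp; simpl. unfold log_integral.
    replace (1 - l + l * b * (1 - l)) with ((1 - l) * (1 + l * b)) by ring. field. nra.
Qed.

Lemma log_integral_asymptotics b e : 0 < b -> 0 < e < 1 ->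
  filterlim (fun l => log_integral b e l * / (- ln (1 - l))) (at_left 1) (locally (1 / b)).
Proof.
  intros Hb He.
  set (iL := fun l => / (- ln (1 - l))).
  apply (filterlim_ext_loc (fun l => / (l * b) *
    (ln ((1 - l) + l * b * (1 - e)) * iL l - ln (1 + l * b) * iL l + 1))).
  - apply (at_left_interval _ 1 1 Rlt_0_1). intros l Hl. unfold iL.
    assert (HL := neg_ln_pos l ltac:(lra)).
    unfold log_integral. rewrite ln_mult by nra. field. repeat split; lra.
  - replace (1 / b) with (/ (1 * b) * (ln (1 - 1 + 1 * b * (1 - e)) * 0 - ln (1 + 1 * b) * 0 + 1))
      by (field; lra).
    assert (Hcont : forall g : R -> R, continuous g 1 -> filterlim (fun l => g l * iL l) (at_left 1) (locally (g 1 * 0)))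
      by (intros g Hg; apply filterlim_Rmult; [apply continuous_at_left, Hg | apply inv_neg_ln_vanishes]).
    apply filterlim_Rmult.
    + apply filterlim_Rinv; [|nra]. apply (continuous_at_left (fun l => l * b)).
      apply (@ex_derive_continuous R_AbsRing R_NormedModule). auto_derive. auto.
    + apply (filterlim_Rplus _ (fun _ => 1)); [|apply filterlim_const].
      apply (filterlim_Rplus _ (fun l => - (ln (1 + l * b) * iL l))).
      * apply (Hcont (fun l => ln (1 - l + l * b * (1 - e)))).
        apply (@ex_derive_continuous R_AbsRing R_NormedModule). auto_derive. nra.
      * apply filterlim_Ropp, (Hcont (fun l => ln (1 + l * b))).
        apply (@ex_derive_continuous R_AbsRing R_NormedModule). auto_derive. nra.
Qed.

Section HeavyTraffic.
Variables d K : nat.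
Hypothesis HK : (1 <= K)%nat.
Hypothesis HKd : (K < d)%nat.

(* Phi(l) = int_0^l dv / (1 - l r(v)), so that E[W_l] = (Phi(l) - l) / l. *)
Definition Phi (l : R) : R := RInt (fun v => / (1 - l * rpoly d K v)) 0 l.

Lemma denom_qpoly l v : 1 - l * rpoly d K v = (1 - l) + l * ((1 - v) * qpoly d K v).
Proof. rewrite <- (one_minus_rpoly d K HK HKd). ring. Qed.

Lemma inv_denom_ex_RInt l a b : 0 < l < 1 -> 0 <= a <= 1 -> 0 <= b <= 1 ->
  ex_RInt (fun v => / (1 - l * rpoly d K v)) a b.
Proof. intros Hl. apply ex_RInt_unit, (inv_denom_continuous d K HK HKd l Hl). Qed.

(* r/(1 - l r) = (1/(1 - l r) - 1) / l. *)
Lemma Ewait_Phi l : 0 < l < 1 -> Ewait d K l = (Phi l - l) * / l.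
Proof.
  intros Hl. unfold Ewait, Phi.
  assert (Hg := inv_denom_ex_RInt l 0 l Hl ltac:(lra) ltac:(lra)).
  assert (Hc : ex_RInt (fun _ : R => 1) 0 l)
    by (apply (@ex_RInt_continuous R_CompleteNormedModule); intros; apply continuous_const).
  rewrite (RInt_ext _ (fun v => scal (/ l) (minus (/ (1 - l * rpoly d K v)) 1))).
  - rewrite (RInt_scal (V := R_CompleteNormedModule)) by (apply (@ex_RInt_minus R_NormedModule); auto).
    rewrite (RInt_minus (V := R_CompleteNormedModule)), RInt_const by auto.
    unfold scal, minus, plus, opp, mult; simpl. unfold mult; simpl. ring.
  - intros x Hx. rewrite Rmin_left, Rmax_right in Hx by lra.
    assert (H := denom_bounds d K HK HKd l x Hl ltac:(lra)).
    unfold scal, minus, plus, opp, mult; simpl. unfold mult; simpl. field. split; lra.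
Qed.

(* Away from v = 1 the integrand of Phi stays bounded: on [0, 1-d1] it is at
   most 1 / (l d1 q0), where q0 is the minimum of qpoly on [0,1]. *)
Lemma Phi_head_bound q0 d1 l : 0 < q0 -> (forall v, 0 <= v <= 1 -> q0 <= qpoly d K v) ->
  0 < d1 <= 1 / 4 -> 1 - d1 < l < 1 ->
  0 <= RInt (fun v => / (1 - l * rpoly d K v)) 0 (1 - d1) <= 2 / (d1 * q0).
Proof.
  intros Hq0 Hq Hd1 Hl.
  assert (Hl01 : 0 < l < 1) by lra.
  assert (Hpos : 0 < l * d1 * q0) by (apply Rmult_lt_0_compat; [apply Rmult_lt_0_compat|]; lra).
  assert (Hpt : forall x, 0 <= x <= 1 - d1 -> 0 < / (1 - l * rpoly d K x) <= / (l * d1 * q0)).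
  { intros x Hx. rewrite (denom_qpoly l x). assert (Hqx := Hq x ltac:(lra)).
    assert (l * d1 * q0 <= l * ((1 - x) * qpoly d K x)).
    { rewrite Rmult_assoc. apply Rmult_le_compat_l; [lra|]. apply Rmult_le_compat; lra. }
    split; [apply Rinv_0_lt_compat | apply Rinv_le_contravar]; lra. }
  assert (Hex := inv_denom_ex_RInt l 0 (1 - d1) Hl01 ltac:(lra) ltac:(lra)).
  split.
  - apply RInt_ge_0; [lra | exact Hex |]. intros x Hx. apply Rlt_le, Hpt. lra.
  - assert (Hb := abs_RInt_le_const _ 0 (1 - d1) (/ (l * d1 * q0)) ltac:(lra) Hex).
    assert (Hb' : Rabs (RInt (fun v => / (1 - l * rpoly d K v)) 0 (1 - d1)) <= (1 - d1 - 0) * / (l * d1 * q0)).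
    { apply Hb. intros x Hx. destruct (Hpt x Hx). rewrite Rabs_pos_eq; lra. }
    apply Rabs_le_between in Hb'. destruct Hb' as [_ Hb'].
    apply Rle_trans with ((1 - d1 - 0) * / (l * d1 * q0)); [exact Hb'|].
    replace (2 / (d1 * q0)) with (/ (1 / 2 * d1 * q0)) by (field; split; lra).
    assert (/ (l * d1 * q0) <= / (1 / 2 * d1 * q0))
      by (apply Rinv_le_contravar; [apply Rmult_lt_0_compat; [apply Rmult_lt_0_compat|] | apply Rmult_le_compat_r; [|apply Rmult_le_compat_r]]; lra).
    assert (0 < / (l * d1 * q0)) by (apply Rinv_0_lt_compat; lra). nra.
Qed.

(* Near v = 1, bounds a <= qpoly <= b turn the integrand into the explicit
   integrands of log_integral. *)
Lemma Phi_tail_bounds a b eta l : 0 < a -> 0 < eta < l -> l < 1 ->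
  (forall x, eta <= x <= l -> a <= qpoly d K x <= b) ->
  log_integral b eta l <= RInt (fun v => / (1 - l * rpoly d K v)) eta l <= log_integral a eta l.
Proof.
  intros Ha Heta Hl Hab.
  assert (Hb : 0 < b) by (destruct (Hab l ltac:(lra)); lra).
  assert (J1 := is_RInt_log_integral b eta l Hb Heta Hl).
  assert (J2 := is_RInt_log_integral a eta l Ha Heta Hl).
  assert (Hex := inv_denom_ex_RInt l eta l ltac:(lra) ltac:(lra) ltac:(lra)).
  assert (Hcmp : forall x, eta <= x <= l ->
    0 < (1 - l) + l * a * (1 - x) /\ (1 - l) + l * a * (1 - x) <= 1 - l * rpoly d K x /\
    1 - l * rpoly d K x <= (1 - l) + l * b * (1 - x)).
  { intros x Hx. rewrite (denom_qpoly l x). destruct (Hab x Hx).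
    assert (0 <= l * (1 - x)) by nra. assert (0 < l * a * (1 - x) + (1 - l)) by nra. nra. }
  rewrite <- (@is_RInt_unique R_CompleteNormedModule _ _ _ _ J1).
  rewrite <- (@is_RInt_unique R_CompleteNormedModule _ _ _ _ J2).
  split; apply RInt_le; try lra; try (eexists; eassumption); try exact Hex;
    intros x Hx; destruct (Hcmp x ltac:(lra)) as [H1 [H2 H3]]; apply Rinv_le_contravar; lra.
Qed.

Lemma qpoly_min : exists q0, 0 < q0 /\ forall v, 0 <= v <= 1 -> q0 <= qpoly d K v.
Proof.
  destruct (continuity_ab_min (qpoly d K) 0 1 ltac:(lra)) as [mx [H1 H2]].
  - intros c _. apply continuity_pt_filterlim, qpoly_continuous.
  - exists (qpoly d K mx). split; auto. apply qpoly_pos; auto.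
Qed.

Lemma qpoly_near1 e : 0 < e -> exists d1, 0 < d1 <= 1 / 4 /\
  forall x, 1 - d1 <= x <= 1 -> qpoly d K 1 - e <= qpoly d K x <= qpoly d K 1 + e.
Proof.
  intros He.
  destruct (continuous_delta (qpoly d K) 1 e (qpoly_continuous d K 1) He) as [dl [Hdl Hd]].
  exists (Rmin dl (1 / 2) / 2).
  assert (Hm1 := Rmin_l dl (1 / 2)). assert (Hm2 := Rmin_r dl (1 / 2)).
  assert (0 < Rmin dl (1 / 2)) by (apply Rmin_glb_lt; lra).
  split; [lra|]. intros x Hx.
  destruct (Req_dec x 1) as [->|Hx1]; [lra|].
  assert (Hclose := Hd x ltac:(rewrite Rabs_left; lra)). apply Rabs_lt_between in Hclose. lra.
Qed.

(* Phi(l) ~ -ln(1-l) / q(1): split [0,l] at 1 - d1, where qpoly is e-close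
   to q(1) on [1-d1, 1]; the head contributes O(1) and the tail is squeezed
   between two explicit logarithmic integrals. *)
Lemma Phi_asymptotics :
  filterlim (fun l => Phi l * / (- ln (1 - l))) (at_left 1) (locally (1 / qpoly d K 1)).
Proof.
  apply filterlim_Rabs. intros t Ht.
  destruct qpoly_min as [q0 [Hq0 Hq]].
  set (k := qpoly d K 1).
  assert (Hk : 0 < k) by (apply qpoly_pos; auto; lra).
  destruct (reciprocal_perturbation k t Hk Ht) as [e [He [Hlo Hhi]]].
  destruct (qpoly_near1 e ltac:(lra)) as [d1 [Hd1 Hd]]. fold k in Hd.
  set (eta := 1 - d1). set (C := 2 / (d1 * q0)).
  assert (Elog : forall b, 0 < b -> at_left 1 (fun l =>
    Rabs (log_integral b eta l * / (- ln (1 - l)) - 1 / b) < t / 8)).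
  { intros b Hb. apply filterlim_Rabs; [apply log_integral_asymptotics; unfold eta; lra | lra]. }
  assert (E3 : at_left 1 (fun l => Rabs (C * / (- ln (1 - l)) - 0) < t / 8)).
  { apply filterlim_Rabs; [|lra]. rewrite <- (Rmult_0_r C).
    apply filterlim_Rmult; [apply filterlim_const | apply inv_neg_ln_vanishes]. }
  assert (E4 : at_left 1 (fun l => eta < l < 1))
    by (apply (at_left_interval _ 1 d1 ltac:(lra)); intros l Hl; unfold eta; lra).
  assert (E1 := Elog (k + e) ltac:(lra)). assert (E2 := Elog (k - e) ltac:(lra)).
  generalize (filter_and _ _ E1 (filter_and _ _ E2 (filter_and _ _ E3 E4))).
  apply filter_imp. intros l [H1 [H2 [H3 H4]]].
  assert (Hl : 0 < l < 1) by (unfold eta in H4; lra).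
  assert (HiL : 0 < / (- ln (1 - l))) by (apply Rinv_0_lt_compat, neg_ln_pos, Hl).
  set (iL := / (- ln (1 - l))) in *.
  unfold Phi. rewrite <- (RInt_Chasles (V := R_CompleteNormedModule) _ 0 eta l)
    by (apply inv_denom_ex_RInt; unfold eta in *; lra).
  destruct (Phi_head_bound q0 d1 l Hq0 Hq Hd1 ltac:(unfold eta in *; lra)) as [HA1 HA2].
  destruct (Phi_tail_bounds (k - e) (k + e) eta l ltac:(lra) ltac:(unfold eta in *; lra) ltac:(lra))
    as [HB1 HB2].
  { intros x Hx. apply Hd. unfold eta in *. lra. }
  fold eta C in HA1, HA2.
  set (A := RInt (fun v => / (1 - l * rpoly d K v)) 0 eta) in *.
  set (B := RInt (fun v => / (1 - l * rpoly d K v)) eta l) in *.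
  apply Rabs_lt_between in H1. apply Rabs_lt_between in H2. apply Rabs_lt_between in H3.
  assert (A * iL <= C * iL) by (apply Rmult_le_compat_r; lra).
  assert (0 <= A * iL) by (apply Rmult_le_pos; lra).
  assert (log_integral (k + e) eta l * iL <= B * iL) by (apply Rmult_le_compat_r; lra).
  assert (B * iL <= log_integral (k - e) eta l * iL) by (apply Rmult_le_compat_r; lra).
  change (plus A B) with (A + B). apply Rabs_lt_between. lra.
Qed.

(* Step 4 of the proof: with X(l) = ln(1 + l q(l)), one has
   -ln p_l = -ln(1-l) - X(l), and E[W_l] = (Phi(l) - l) / l. *)
Lemma heavy_traffic_limit :
  filterlim (fun l => Ewait d K l / (- ln (1 - l * rpoly d K l))) (at_left 1)
    (locally (1 / qpoly d K 1)).
Proof.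
  set (X := fun l => ln (1 + l * qpoly d K l)).
  set (iL := fun l => / (- ln (1 - l))).
  assert (Hk : 0 < qpoly d K 1) by (apply qpoly_pos; auto; lra).
  apply (filterlim_ext_loc (fun l => (Phi l * iL l - l * iL l) * / l * / (1 - X l * iL l))).
  - apply (at_left_interval _ 1 (1 / 2) ltac:(lra)). intros l Hl.
    assert (HL := neg_ln_pos l ltac:(lra)).
    assert (HQ := qpoly_pos d K HK HKd l ltac:(lra)).
    assert (Hp : 1 - l * rpoly d K l = (1 - l) * (1 + l * qpoly d K l)) by (rewrite denom_qpoly; ring).
    rewrite Hp, ln_mult, Ewait_Phi by nra. unfold X, iL.
    set (a := - ln (1 - l)) in *. set (b := ln (1 + l * qpoly d K l)).
    replace (- (ln (1 - l) + b)) with (a - b) by (unfold a; ring).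
    replace (a - b) with (a * (1 - b * / a)) by (field; lra).
    unfold Rdiv. rewrite Rinv_mult. ring.
  - replace (1 / qpoly d K 1)
      with ((1 / qpoly d K 1 - 1 * 0) * / 1 * / (1 - X 1 * 0)) by (field; lra).
    assert (Hid : filterlim (fun l : R => l) (at_left 1) (locally 1))
      by apply (continuous_at_left (fun l => l)), continuous_id.
    apply filterlim_Rmult; [apply filterlim_Rmult|].
    + apply (filterlim_Rplus _ (fun l => - (l * iL l))); [apply Phi_asymptotics|].
      apply filterlim_Ropp, filterlim_Rmult; [exact Hid | apply inv_neg_ln_vanishes].
    + apply filterlim_Rinv; [exact Hid | lra].
    + apply filterlim_Rinv; [|lra].
      apply (filterlim_Rplus (fun _ => 1) (fun l => - (X l * iL l))); [apply filterlim_const|].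
      apply filterlim_Ropp, filterlim_Rmult; [|apply inv_neg_ln_vanishes].
      apply (continuous_at_left X 1). unfold X.
      apply (continuous_comp (fun l => 1 + l * qpoly d K l) ln).
      * apply (continuous_plus (fun _ => 1) (fun l => l * qpoly d K l)); [apply continuous_const|].
        apply (continuous_mult (fun l => l) (qpoly d K)); [apply continuous_id | apply qpoly_continuous].
      * apply (@ex_derive_continuous R_AbsRing R_NormedModule). auto_derive. lra.
Qed.

End HeavyTraffic.

Theorem proposition5p2 (d K : nat) (F : R -> R -> R) :
  (1 <= K)%nat -> (K < d)%nat ->
  (forall l, 0 < l < 1 -> solves_ode d K l (F l)) ->
  filterlim (fun l => - EW d K l (F l) / ln (p_idle d K l)) (at_right 0)
    (locally (1 / INR (d - K + 1))) /\
  filterlim (fun l => - EW d K l (F l) / ln (p_idle d K l)) (at_left 1)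
    (locally (INR K / INR (d - K))).
Proof.
  intros HK HKd HF.
  assert (Hratio : forall l, 0 < l < 1 ->
    Ewait d K l / (- ln (1 - l * rpoly d K l)) = - EW d K l (F l) / ln (p_idle d K l)).
  { intros l Hl. rewrite (EW_closed_form d K HK HKd l Hl (F l) (HF l Hl)), (p_idle_rpoly d K HK HKd).
    unfold Rdiv. rewrite Rinv_opp. ring. }
  split.
  - replace (d - K + 1)%nat with (S (d - K)) by lia.
    apply (filterlim_ext_loc (fun l => Ewait d K l / (- ln (1 - l * rpoly d K l)))).
    + apply (at_right_interval _ 0 1 Rlt_0_1). intros l Hl. apply Hratio. lra.
    + apply light_traffic_limit; assumption.
  - replace (INR K / INR (d - K)) with (1 / qpoly d K 1).
    + apply (filterlim_ext_loc (fun l => Ewait d K l / (- ln (1 - l * rpoly d K l)))).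
      * apply (at_left_interval _ 1 1 Rlt_0_1). intros l Hl. apply Hratio. lra.
      * apply heavy_traffic_limit; assumption.
    + rewrite (qpoly1 d K HK HKd), (ecoef1 d K HK HKd).
      assert (0 < INR K) by (apply lt_0_INR; lia).
      assert (0 < INR (d - K)) by (apply lt_0_INR; lia). field. lra.
Qed.
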